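(* Let $z,b$ be non-singular complex $r\times r$ matrices. Then $$\bar z\,{}^tz=\bar b\,{}^tb,\qquad {}^tz\,\bar z=b^\ast b,\qquad b\,{}^tz=z\,{}^tb$$ hold if and only if $b=USV^\ast$ and $z=USW\,{}^tV$ for some positive definite real diagonal matrix $S$ and unitary matrices $U,V,W$ with ${}^tW=W$ and $WS=SW$.
   Context: ${}^tM$ denotes the transpose, $\bar M$ the entrywise complex conjugate, and $M^\ast={}^t\bar M$. *)

From HB Require Import structures.
From mathcomp Require Import all_boot all_order all_algebra.
Set Implicit Arguments. Unset Strict Implicit. Unset Printing Implicit Defensive.
Import Order.TTheory GRing.Theory Num.Theory.
Local Open Scope ring_scope.

Definition conjm {C : numClosedFieldType} {m n : nat} (M : 'M[C]_(m, n)) : 'M[C]_(m, n) :=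
  map_mx Num.conj M.

Definition adjm {C : numClosedFieldType} {m n : nat} (M : 'M[C]_(m, n)) : 'M[C]_(n, m) :=
  (conjm M)^T.

From HB Require Import structures.
From mathcomp Require Import all_boot all_order all_algebra.
Import Order.TTheory GRing.Theory Num.Theory.
Set Implicit Arguments. Unset Strict Implicit. Unset Printing Implicit Defensive.
Local Open Scope ring_scope.
Local Open Scope sesquilinear_scope.

(* Write b = U S V^* with S a positive diagonal matrix, obtained from the
   spectral decomposition of the positive definite matrix b b^*, and put
   W := S^-1 U^* z \bar V, so that z = U S W {}^tV.  Cancelling the invertible
   outer factors, the three equations become \bar W {}^tW = 1,
   {}^tW S^2 \bar W = S^2 and {}^tW = W: W is a symmetric unitary matrix
   commuting with S^2, hence with S since the entries of S are positive. *)

Section ConjugateMatrices.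
Context {C : numClosedFieldType}.

Lemma adjmE m n (M : 'M[C]_(m, n)) : adjm M = M^t*.
Proof. by rewrite /adjm /conjm map_trmx. Qed.

Lemma conjmM m n p (A : 'M[C]_(m, n)) (B : 'M[C]_(n, p)) :
  conjm (A *m B) = conjm A *m conjm B.
Proof. exact: map_mxM. Qed.

Lemma conjmK m n (M : 'M[C]_(m, n)) : conjm (conjm M) = M.
Proof. exact: map_mxCK. Qed.

Lemma conjm_tr m n (M : 'M[C]_(m, n)) : conjm M^T = adjm M.
Proof. by rewrite /adjm /conjm map_trmx. Qed.

Lemma conjm_adjm m n (M : 'M[C]_(m, n)) : conjm (adjm M) = M^T.
Proof. by rewrite -conjm_tr conjmK. Qed.

Lemma adjmM m n p (A : 'M[C]_(m, n)) (B : 'M[C]_(n, p)) :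
  adjm (A *m B) = adjm B *m adjm A.
Proof. by rewrite /adjm conjmM trmx_mul. Qed.

Lemma adjmK m n (M : 'M[C]_(m, n)) : adjm (adjm M) = M.
Proof. by rewrite /adjm -/(adjm M) -conjm_tr conjmK trmxK. Qed.

Lemma adjm_inv n (M : 'M[C]_n) : adjm (invmx M) = invmx (adjm M).
Proof. by rewrite /adjm /conjm map_invmx trmx_inv. Qed.

Lemma unitarymx_adjmP m n (U : 'M[C]_(m, n)) :
  reflect (U *m adjm U = 1%:M) (U \is unitarymx).
Proof. by rewrite adjmE; apply: unitarymxP. Qed.

Lemma mulmx_rcancel m n (M : 'M[C]_(m, n)) (X Y : 'M[C]_n) :
  X *m Y = 1%:M -> M *m X *m Y = M.
Proof. by move=> XY; rewrite -mulmxA XY mulmx1. Qed.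

Lemma mulmx_unitmx_inj n (L R X Y : 'M[C]_n) :
  L \in unitmx -> R \in unitmx -> L *m X *m R = L *m Y *m R -> X = Y.
Proof.
move=> uL uR /(congr1 (mulmx^~ (invmx R))); rewrite !mulmxK //.
by move/(congr1 (mulmx (invmx L))); rewrite !mulKmx.
Qed.

Section Unitary.
Variables (n : nat) (U : 'M[C]_n).
Hypothesis U_unitary : U \is unitarymx.

Lemma unitarymx_mulmxV : U *m adjm U = 1%:M.
Proof. exact/unitarymx_adjmP. Qed.

Lemma unitarymx_mulVmx : adjm U *m U = 1%:M.
Proof. exact/mulmx1C/unitarymx_mulmxV. Qed.

Lemma unitarymx_conjm_tr : conjm U *m U^T = 1%:M.
Proof. by rewrite -conjm_adjm -conjmM unitarymx_mulmxV /conjm map_mx1. Qed.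

Lemma unitarymx_tr_conjm : U^T *m conjm U = 1%:M.
Proof. exact/mulmx1C/unitarymx_conjm_tr. Qed.

End Unitary.

Section PositiveDiagonal.
Variables (n : nat) (s : 'rV[C]_n).
Hypothesis s_gt0 : forall i, 0 < s 0 i.

Lemma conjm_diag_pos : conjm (diag_mx s) = diag_mx s.
Proof.
rewrite /conjm map_diag_mx; congr diag_mx; apply/rowP => i.
by rewrite mxE /= geC0_conj // ltW.
Qed.

Lemma adjm_diag_pos : adjm (diag_mx s) = diag_mx s.
Proof. by rewrite /adjm conjm_diag_pos tr_diag_mx. Qed.

Lemma unitmx_diag_pos : diag_mx s \in unitmx.
Proof.
rewrite unitmxE det_diag unitfE; apply/prodf_neq0 => i _.
by rewrite gt_eqF.
Qed.

Lemma comm_mx_diag_sqr (W : 'M[C]_n) :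
  comm_mx W (diag_mx s *m diag_mx s) -> comm_mx W (diag_mx s).
Proof.
rewrite /comm_mx mulmx_diag => /matrixP WD2; apply/matrixP => i j.
move: (WD2 i j); rewrite !mul_mx_diag !mul_diag_mx !mxE.
have [->|Wij_neq0] := eqVneq (W i j) 0; first by rewrite !mul0r !mulr0.
rewrite [_ * W i j]mulrC => /(mulfI Wij_neq0)/eqP.
by rewrite -!expr2 eqrXn2 ?ltW // => /eqP->; rewrite mulrC.
Qed.

End PositiveDiagonal.

Lemma unitmx_gram_diag_gt0 n (M : 'M[C]_n) :
  M \in unitmx -> forall i, 0 < (M *m adjm M) i i.
Proof.
move=> uM i; have -> : (M *m adjm M) i i = dotmx (row i M) (row i M).
  by rewrite dotmxE adjmE !mxE; apply: eq_bigr => k _; rewrite !mxE.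
apply: dotmx_is_dotmx; apply: contraTneq uM => Mi0.
apply/negP => uM; have /rowP/(_ i) := congr1 (row i) (mulmxV uM).
by rewrite row_mul Mi0 mul0mx !mxE eqxx => /esym/eqP; rewrite oner_eq0.
Qed.

Lemma unitmx_svd n (b : 'M[C]_n) : b \in unitmx ->
  exists (s : 'rV[C]_n) (U V : 'M[C]_n), (forall i, 0 < s 0 i) /\
    U \is unitarymx /\ V \is unitarymx /\ b = U *m diag_mx s *m adjm V.
Proof.
move=> b_unit; pose A := b *m adjm b.
have A_normal : A \is normalmx by apply/normalmxP; rewrite -adjmE /A adjmM adjmK.
pose P := spectralmx A; pose d := spectral_diag A.
have P_unitary : P \is unitarymx := spectral_unitarymx A.
pose M := P *m b.
have MM : M *m adjm M = diag_mx d.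
  move/orthomx_spectralP: A_normal; rewrite invmx_unitary // -adjmE -/P -/d.
  rewrite /M adjmM !mulmxA -(mulmxA P b) -/A => ->.
  rewrite !mulmxA unitarymx_mulmxV // mul1mx.
  exact/mulmx_rcancel/unitarymx_mulmxV.
have d_gt0 i : 0 < d 0 i.
  have M_unit : M \in unitmx by rewrite unitmx_mul b_unit unitarymx_unit.
  by have := unitmx_gram_diag_gt0 M_unit i; rewrite MM mxE eqxx mulr1n.
pose s := \row_i sqrtC (d 0 i).
have s_gt0 i : 0 < s 0 i by rewrite mxE sqrtC_gt0.
have D_unit := unitmx_diag_pos s_gt0.
have DD : diag_mx s *m diag_mx s = diag_mx d.
  by rewrite mulmx_diag; congr diag_mx; apply/rowP => i; rewrite !mxE -expr2 sqrtCK.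
pose X := invmx (diag_mx s) *m M.
have X_unitary : X \is unitarymx.
  apply/unitarymx_adjmP; rewrite /X adjmM adjm_inv adjm_diag_pos // mulmxA.
  by rewrite -(mulmxA _ M) MM -DD mulmxA mulmxK // mulVmx.
exists s, (adjm P), (adjm X); split=> //; split; [|split].
- by apply/unitarymx_adjmP; rewrite adjmK unitarymx_mulVmx.
- by apply/unitarymx_adjmP; rewrite adjmK; apply/mulmx1C/unitarymx_adjmP.
- by rewrite adjmK /X /M !mulmxA mulmxK // unitarymx_mulVmx // mul1mx.
Qed.

Section Factorization.
Variables (n : nat) (s : 'rV[C]_n) (U V W : 'M[C]_n).
Hypotheses (s_gt0 : forall i, 0 < s 0 i)
  (U_unitary : U \is unitarymx) (V_unitary : V \is unitarymx).
Local Notation D := (diag_mx s).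
Local Notation b := (U *m D *m adjm V).
Local Notation z := (U *m D *m W *m V^T).

Lemma gram_equations_factorP :
  conjm z *m z^T = conjm b *m b^T /\
  z^T *m conjm z = adjm b *m b /\
  b *m z^T = z *m b^T
  <-> [/\ conjm W *m W^T = 1%:M, W^T *m (D *m D) *m conjm W = D *m D & W^T = W].
Proof.
have [cU_unit UT_unit] := mulmx1_unit (unitarymx_conjm_tr U_unitary).
have [U_unit _] := mulmx1_unit (unitarymx_mulmxV U_unitary).
have [V_unit aV_unit] := mulmx1_unit (unitarymx_mulmxV V_unitary).
have D_unit := unitmx_diag_pos s_gt0.
have cUD_unit : conjm U *m D \in unitmx by rewrite unitmx_mul cU_unit.
have UD_unit : U *m D \in unitmx by rewrite unitmx_mul U_unit.
have DUT_unit : D *m U^T \in unitmx by rewrite unitmx_mul UT_unit andbT.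
have VV := mulmx_rcancel _ (unitarymx_mulVmx V_unitary).
have VcV := mulmx_rcancel _ (unitarymx_tr_conjm V_unitary).
have UcU := mulmx_rcancel _ (unitarymx_tr_conjm U_unitary).
have UU := mulmx_rcancel _ (unitarymx_mulVmx U_unitary).
have [[-> ->] [[-> ->] [-> ->]]] :
    (conjm z *m z^T = conjm U *m D *m (conjm W *m W^T) *m (D *m U^T) /\
     conjm b *m b^T = conjm U *m D *m 1%:M *m (D *m U^T)) /\
    (z^T *m conjm z = V *m (W^T *m (D *m D) *m conjm W) *m adjm V /\
     adjm b *m b = V *m (D *m D) *m adjm V) /\
    (b *m z^T = U *m D *m W^T *m (D *m U^T) /\
     z *m b^T = U *m D *m W *m (D *m U^T)).
  do !split; rewrite ?conjmM ?adjmM ?trmx_mul ?trmxK ?conjm_adjm ?conjm_tr ?adjmK;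
  by rewrite ?conjm_diag_pos ?adjm_diag_pos ?tr_diag_mx ?mulmx1 // !mulmxA ?VV ?VcV ?UcU ?UU.
split=> [[]|[-> -> ->]] //.
move=> /(mulmx_unitmx_inj cUD_unit DUT_unit) -> [].
by move=> /(mulmx_unitmx_inj V_unit aV_unit) -> /(mulmx_unitmx_inj UD_unit DUT_unit).
Qed.

End Factorization.

Lemma gram_equations_of_factorization n (s : 'rV[C]_n) (U V W b z : 'M[C]_n) :
  (forall i, 0 < s 0 i) ->
  U \is unitarymx -> V \is unitarymx -> W \is unitarymx ->
  W^T = W -> W *m diag_mx s = diag_mx s *m W ->
  b = U *m diag_mx s *m adjm V -> z = U *m diag_mx s *m W *m V^T ->
  conjm z *m z^T = conjm b *m b^T /\
  z^T *m conjm z = adjm b *m b /\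
  b *m z^T = z *m b^T.
Proof.
move=> s_gt0 U_unitary V_unitary W_unitary WT WD -> ->.
have WcW : W *m conjm W = 1%:M by rewrite -[W in conjm W]WT conjm_tr unitarymx_mulmxV.
apply/gram_equations_factorP => //; split; rewrite WT ?(mulmx1C WcW) //.
by rewrite mulmxA WD -(mulmxA _ W) WD !mulmxA mulmx_rcancel.
Qed.

Lemma factorization_of_gram_equations n (b z : 'M[C]_n) : b \in unitmx ->
  conjm z *m z^T = conjm b *m b^T /\
  z^T *m conjm z = adjm b *m b /\
  b *m z^T = z *m b^T ->
  exists (s : 'rV[C]_n) (U V W : 'M[C]_n),
    (forall i, 0 < s 0 i) /\
    U \is unitarymx /\ V \is unitarymx /\ W \is unitarymx /\
    W^T = W /\ W *m diag_mx s = diag_mx s *m W /\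
    b = U *m diag_mx s *m adjm V /\
    z = U *m diag_mx s *m W *m V^T.
Proof.
move=> b_unit gram_eqs.
have [s [U [V [s_gt0 [U_unitary [V_unitary bE]]]]]] := unitmx_svd b_unit.
pose W := invmx (diag_mx s) *m adjm U *m z *m conjm V.
have zE : z = U *m diag_mx s *m W *m V^T.
  rewrite /W !mulmxA mulmxK ?unitmx_diag_pos // unitarymx_mulmxV // mul1mx.
  by rewrite mulmx_rcancel // unitarymx_conjm_tr.
clearbody W; move: gram_eqs; rewrite bE zE.
case/(gram_equations_factorP _ s_gt0 U_unitary V_unitary) => cWW WDDW WT.
rewrite WT in cWW WDDW.
exists s, U, V, W; do !split => //.
  by apply/unitarymx_adjmP; rewrite -conjm_tr WT; apply/mulmx1C.
apply: (comm_mx_diag_sqr s_gt0); rewrite /comm_mx.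
by have := congr1 (mulmx^~ W) WDDW; rewrite /= (mulmx_rcancel _ cWW).
Qed.

End ConjugateMatrices.

Theorem lemma9 (C : numClosedFieldType) (r : nat) (z b : 'M[C]_r) :
  z \in unitmx -> b \in unitmx ->
  ((conjm z *m z^T = conjm b *m b^T /\
    z^T *m conjm z = adjm b *m b /\
    b *m z^T = z *m b^T)
   <->
   (exists (s : 'rV[C]_r) (U V W : 'M[C]_r),
      (forall i, 0 < s 0 i) /\
      U \is unitarymx /\ V \is unitarymx /\ W \is unitarymx /\
      W^T = W /\ W *m diag_mx s = diag_mx s *m W /\
      b = U *m diag_mx s *m adjm V /\
      z = U *m diag_mx s *m W *m V^T)).
Proof.
move=> _ b_unit; split; first exact: factorization_of_gram_equations.
case=> s [U [V [W [s_gt0 [U_unitary [V_unitary [W_unitary [WT [WD [bE zE]]]]]]]]]].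
exact: gram_equations_of_factorization bE zE.
Qed.
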